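(* Let $D$ be an arc-colored complete digraph of order $n\geq 4$. If $D$ contains no rainbow triangle, then there is a vertex $v\in V(D)$ with $d^{s}(v)\leq\lfloor\frac{n}{2}\rfloor$.
   Context: The complete digraph on $n$ vertices has both arcs $xy,yx$ for every pair of distinct vertices. An arc-coloring is any map $C:A(D)\to\mathbb{N}$. A rainbow triangle is a directed 3-cycle with pairwise distinct arc colors. A color $c$ used in $D$ is saturated by $v$ if every arc of color $c$ is incident to $v$; $d^{s}(v)$ is the number of colors saturated by $v$. *)

From mathcomp Require Import all_boot.
Set Implicit Arguments. Unset Strict Implicit. Unset Printing Implicit Defensive.

(* Complete digraph on vertex set 'I_n: every ordered pair (x,y) with x != y is an arc.
   An arc-coloring is C : 'I_n -> 'I_n -> nat; only values on arcs (x != y) matter. *)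
Definition arc_coloring (n : nat) := 'I_n -> 'I_n -> nat.

Definition used_colors n (C : arc_coloring n) : seq nat :=
  undup [seq C a.1 a.2 | a <- enum [pred a : 'I_n * 'I_n | a.1 != a.2]].

Definition rainbow_triangle n (C : arc_coloring n) (x y z : 'I_n) : bool :=
  [&& x != y, y != z, z != x,
      C x y != C y z, C y z != C z x & C z x != C x y].

Definition has_rainbow_triangle n (C : arc_coloring n) : Prop :=
  exists x y z, rainbow_triangle C x y z.

Definition saturated_by n (C : arc_coloring n) (v : 'I_n) (c : nat) : bool :=
  [forall x : 'I_n, forall y : 'I_n,
     ((x != y) && (C x y == c)) ==> ((x == v) || (y == v))].

Definition sat_degree n (C : arc_coloring n) (v : 'I_n) : nat :=
  count (saturated_by C v) (used_colors C).

(* A colour saturated by v appears only on arcs at v.  So in a rainbow-free triangle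
   through v in which one arc at v has a colour saturated by v, the other arc at v
   shares its colour with one of the two remaining arcs.  Consequently a vertex
   saturating both an out-colour and an in-colour saturates at most two colours.  If
   every d^s exceeds n/2 (hence 2), reversing all arcs if needed we get a vertex v
   saturating only out-colours, and an out-neighbour b with C v b saturated by v.
   Then b saturates only in-colours, on arcs coming from vertices y with C v y not
   saturated by v; so d^s(v) + d^s(b) <= n, a contradiction. *)

From mathcomp Require Import all_boot zify.
Set Implicit Arguments. Unset Strict Implicit. Unset Printing Implicit Defensive.

Section Saturation.
Variables (n : nat) (C : arc_coloring n).

Definition out_saturated (v : 'I_n) : {set 'I_n} :=
  [set y | (y != v) && saturated_by C v (C v y)].

Definition in_saturated (v : 'I_n) : {set 'I_n} :=
  [set x | (x != v) && saturated_by C v (C x v)].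

Lemma saturated_incident v c x y :
  saturated_by C v c -> x != y -> C x y = c -> (x == v) || (y == v).
Proof.
move=> /forallP/(_ x)/forallP/(_ y)/implyP sat xy Cxy.
by apply: sat; rewrite xy Cxy eqxx.
Qed.

Lemma nonincident_color_neq v c x y :
  saturated_by C v c -> x != v -> y != v -> x != y -> C x y != c.
Proof.
move=> sat xv yv xy; apply/eqP => Cxy.
by move: (saturated_incident sat xy Cxy); rewrite (negbTE xv) (negbTE yv).
Qed.

Lemma used_colorsP c :
  reflect (exists x y, x != y /\ C x y = c) (c \in used_colors C).
Proof.
rewrite /used_colors mem_undup; apply: (iffP mapP) => [[[x y]]|[x [y [xy <-]]]].
  by rewrite mem_enum => xy ->; exists x, y.
by exists (x, y); rewrite ?mem_enum.
Qed.

Lemma saturated_used_color v c :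
  c \in used_colors C -> saturated_by C v c ->
  exists2 y, y != v & c = C v y \/ c = C y v.
Proof.
case/used_colorsP=> [x [y [xy <-]]] sat.
case/orP: (saturated_incident sat xy erefl) => /eqP Ev; subst v.
  by exists y; [rewrite eq_sym|left].
by exists x; [|right].
Qed.

Lemma sat_degree_le_size v (s : seq nat) :
  {in out_saturated v, forall y, C v y \in s} ->
  {in in_saturated v, forall x, C x v \in s} ->
  sat_degree C v <= size s.
Proof.
move=> out_s in_s; rewrite /sat_degree -size_filter.
apply: uniq_leq_size; first exact/filter_uniq/undup_uniq.
move=> c; rewrite mem_filter => /andP[sat used].
have [y yv [Ec|Ec]] := saturated_used_color used sat; rewrite Ec.
  by apply: out_s; rewrite inE yv -Ec.
by apply: in_s; rewrite inE yv -Ec.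
Qed.

Lemma sat_degree_le_out v :
  in_saturated v = set0 -> sat_degree C v <= #|out_saturated v|.
Proof.
move=> no_in; rewrite -(size_image (C v)).
by apply: sat_degree_le_size => [y|x]; [exact: image_f|rewrite no_in inE].
Qed.

Lemma sat_degree_le_in v :
  out_saturated v = set0 -> sat_degree C v <= #|in_saturated v|.
Proof.
move=> no_out; rewrite -(size_image (C^~ v)).
by apply: sat_degree_le_size => [y|x]; [rewrite no_out inE|exact: image_f].
Qed.

End Saturation.

Section Converse.
Variables (n : nat) (C : arc_coloring n).

Definition converse : arc_coloring n := fun x y => C y x.

Lemma saturated_by_converse v c : saturated_by converse v c = saturated_by C v c.
Proof.
suff sat_conv (C' : arc_coloring n) :
    saturated_by C' v c -> saturated_by (fun x y => C' y x) v c.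
  by apply/idP/idP; [exact: (sat_conv converse)|exact: sat_conv].
move=> sat; apply/forallP=> x; apply/forallP=> y; apply/implyP=> /andP[xy /eqP Cyx].
by rewrite orbC; apply: (saturated_incident sat _ Cyx); rewrite eq_sym.
Qed.

Lemma used_colors_converse : used_colors converse =i used_colors C.
Proof.
move=> c; apply/used_colorsP/used_colorsP=> -[x [y [xy <-]]];
  by exists y, x; rewrite eq_sym.
Qed.

Lemma sat_degree_converse v : sat_degree converse v = sat_degree C v.
Proof.
rewrite /sat_degree (eq_count (saturated_by_converse v)).
apply/permP/uniq_perm; rewrite ?undup_uniq //; exact: used_colors_converse.
Qed.

Lemma in_saturated_converse v : in_saturated converse v = out_saturated C v.
Proof. by apply/setP=> y; rewrite !inE saturated_by_converse. Qed.

Lemma converse_rainbow_free :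
  ~ has_rainbow_triangle C -> ~ has_rainbow_triangle converse.
Proof.
move=> free [x [y [z]]]; rewrite /rainbow_triangle /converse.
case/and4P=> xy yz zx /and3P[Cyx_zy Czy_xz Cxz_yx]; apply: free; exists x, z, y.
by rewrite /rainbow_triangle eq_sym zx eq_sym yz eq_sym xy eq_sym Czy_xz
  eq_sym Cyx_zy eq_sym Cxz_yx.
Qed.

End Converse.

Section RainbowFree.
Variables (n : nat) (C : arc_coloring n).
Hypothesis rainbow_free : ~ has_rainbow_triangle C.

Lemma rainbow_free_triangle x y z :
  x != y -> y != z -> z != x -> C x y != C y z -> C y z != C z x ->
  C z x = C x y.
Proof.
move=> xy yz zx ne1 ne2; apply/eqP; apply/negPn/negP => ne3.
by apply: rainbow_free; exists x, y, z; rewrite /rainbow_triangle xy yz zx ne1 ne2.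
Qed.

Lemma saturated_mixed_eq w u x :
  u \in out_saturated C w -> x \in in_saturated C w -> u != x -> C w u = C x w.
Proof.
rewrite !inE => /andP[uw sat_u] /andP[xw sat_x] ux.
have wu : w != u by rewrite eq_sym.
apply/esym/rainbow_free_triangle => //.
  by rewrite eq_sym (nonincident_color_neq sat_u).
exact: nonincident_color_neq sat_x uw xw ux.
Qed.

Lemma sat_degree_mixed w u x :
  u \in out_saturated C w -> x \in in_saturated C w -> sat_degree C w <= 2.
Proof.
move=> u_out x_in.
(* By [saturated_mixed_eq], only [C w x] and [C u w] can differ from [C w u]. *)
pose s := [:: C w u; if u \in in_saturated C w then C u w else C w x].
have Cxw_s : C x w \in s.
  have [Eux|ux] := eqVneq u x; first by rewrite /s Eux x_in !inE eqxx orbT.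
  by rewrite -(saturated_mixed_eq u_out x_in ux) inE eqxx.
apply: (@sat_degree_le_size _ _ _ s) => [q q_out|p p_in].
  have [Eqx|qx] := eqVneq q x; last by rewrite (saturated_mixed_eq q_out x_in qx).
  subst q; rewrite /s; case: ifP => [u_in|_]; last by rewrite !inE eqxx orbT.
  have [<-|xu] := eqVneq u x; first by rewrite inE eqxx.
  by rewrite (saturated_mixed_eq q_out u_in) ?inE ?eqxx ?orbT // eq_sym.
have [Epu|up] := eqVneq p u; first by subst p; rewrite /s p_in !inE eqxx orbT.
by rewrite -(saturated_mixed_eq u_out p_in) ?inE ?eqxx // eq_sym.
Qed.

Lemma sat_degree_gt2_pure w :
  2 < sat_degree C w -> in_saturated C w = set0 \/ out_saturated C w = set0.
Proof.
move=> deg_w.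
have [|/set0Pn[u u_out]] := eqVneq (out_saturated C w) set0; first by right.
have [|/set0Pn[x x_in]] := eqVneq (in_saturated C w) set0; first by left.
by move: deg_w; rewrite ltnNge (sat_degree_mixed u_out x_in).
Qed.

Lemma out_saturated_triangle v u w :
  in_saturated C v = set0 -> u \in out_saturated C v -> w != v -> w != u ->
  C u w = C w v.
Proof.
move=> no_in u_out wv wu; move: (u_out); rewrite inE => /andP[uv sat_u].
apply/eqP/negPn/negP => ne.
have Cwv : C w v = C v u.
  have uw : u != w by rewrite eq_sym.
  apply: rainbow_free_triangle => //; first by rewrite eq_sym.
  by rewrite eq_sym; apply: nonincident_color_neq sat_u uv wv uw.
have : w \in in_saturated C v by rewrite inE wv Cwv.
by rewrite no_in inE.
Qed.

Lemma sat_degree_add_le_order v b :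
  in_saturated C v = set0 -> b \in out_saturated C v -> 2 < sat_degree C b ->
  sat_degree C v + sat_degree C b <= n.
Proof.
move=> no_in b_out deg_b; move: (b_out); rewrite inE => /andP[bv _].
have vb : v != b by rewrite eq_sym.
have no_out_b : out_saturated C b = set0.
  have out_b_v : out_saturated C b \subset [set v].
    apply/subsetP=> q; rewrite !inE => /andP[qb sat_q]; apply/negPn/negP => qv.
    have := nonincident_color_neq sat_q qb vb qv.
    by rewrite -(out_saturated_triangle no_in b_out qv qb) eqxx.
  have [no_in_b|//] := sat_degree_gt2_pure deg_b.
  have := sat_degree_le_out no_in_b; have := subset_leq_card out_b_v.
  by rewrite cards1; lia.
have in_b_sub : in_saturated C b \subset ~: out_saturated C v.
  apply/subsetP=> p; rewrite in_setC inE => /andP[pb sat_p]; apply/negP => p_out.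
  have : v \in out_saturated C b.
    by rewrite inE vb -(out_saturated_triangle no_in p_out bv) // eq_sym.
  by rewrite no_out_b inE.
have := sat_degree_le_out no_in; have := sat_degree_le_in no_out_b.
have := subset_leq_card in_b_sub; have := cardsC (out_saturated C v).
by rewrite card_ord; lia.
Qed.

End RainbowFree.

Theorem lemma2 (n : nat) (C : arc_coloring n) :
  4 <= n -> ~ has_rainbow_triangle C ->
  exists v : 'I_n, sat_degree C v <= n./2.
Proof.
move=> n_ge4 free.
have [/existsP//|] := boolP [exists v, sat_degree C v <= n./2].
rewrite negb_exists => /forallP big_deg; exfalso.
have {}big_deg v : n./2 < sat_degree C v by rewrite ltnNge big_deg.
have deg_gt2 v : 2 < sat_degree C v by apply: leq_trans (big_deg v); lia.
have v0 : 'I_n by apply: (@Ordinal n 0); lia.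
wlog no_in : C free big_deg deg_gt2 / in_saturated C v0 = set0.
  move=> out_case; have [|no_out] := sat_degree_gt2_pure free (deg_gt2 v0).
    exact: out_case.
  apply: (out_case (converse C)) => [|v|v|].
  - exact: converse_rainbow_free.
  - by rewrite sat_degree_converse.
  - by rewrite sat_degree_converse.
  - by rewrite in_saturated_converse.
have /set0Pn[b b_out] : out_saturated C v0 != set0.
  rewrite -card_gt0; apply: leq_trans (sat_degree_le_out no_in).
  exact: leq_trans (deg_gt2 v0).
have := sat_degree_add_le_order free no_in b_out (deg_gt2 b).
by have := big_deg v0; have := big_deg b; lia.
Qed.
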